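(* Let $n\ge 2$ and let $(T,A(T),B(T))$ be a clean, $d$-sparse signed tree model of an $n$-vertex graph $G$, where $T$ is an ordered full rooted binary tree whose leaves, read from left to right, are $1,\dots,n$ (so $V(G)=[n]$). Let $R$ be the full, complete rooted binary tree whose leaves are $1,\dots,n$ from left to right (so $R$ has depth $\lceil\log n\rceil+1$). Then there exist sets $A(R),B(R)$ such that $(R,A(R),B(R))$ is a $4d\log^2 n$-sparse signed tree model of $G$.
   Context: Tree notation: for a rooted tree $T$, $u\prec_T u'$ means $u$ is a strict ancestor of $u'$, $u\preceq_T u'$ means $u=u'$ or $u\prec_T u'$; for unordered pairs, $uv\preceq_T u'v'$ means ($u\preceq_T u'$ and $v\preceq_T v'$) or ($v\preceq_T u'$ and $u\preceq_T v'$), and $uv\prec_T u'v'$ means $uv\preceq_T u'v'$ and $\{u,v\}\ne\{u',v'\}$. Full: every internal node has two children; complete: all levels filled except possibly the last, whose leaves are left-aligned; depth: maximum number of nodes on a root-to-leaf path. A transversal pair of $T$ is a pair of distinct nodes neither an ancestor of the other; two transversal pairs cross if their endpoints can be named $\{a,b\},\{a',b'\}$ with $a\prec_T a'$ and $b'\prec_T b$. A signed tree model is $(T,A(T),B(T))$ with $T$ a full rooted binary tree and $A(T),B(T)$ disjoint sets of transversal pairs of $T$, no two pairs of $A(T)\cup B(T)$ crossing. It is a model of the graph on the leaf set $L(T)$ in which distinct leaves $u,v$ are adjacent iff some $u'v'\in B(T)$ has $u'v'\preceq_T uv$ and no $u''v''\in A(T)$ has $u'v'\prec_T u''v''\preceq_T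 uv$. It is clean if every pair of siblings of $T$ lies in $A(T)\cup B(T)$, and $c$-sparse if $|A(T)\cup B(T)|\le c\,|V(T)|$. $\log$ is base 2. *)

From Stdlib Require Import Reals.
From mathcomp Require Import all_boot.

Set Implicit Arguments.
Unset Strict Implicit.
Unset Printing Implicit Defensive.

Inductive btree := BLeaf | BNode of btree & btree.

(* Nodes are addressed by root-to-node paths: false = left child,
   true = right child.  u is an ancestor of v iff u is a prefix of v. *)
Definition npath := seq bool.

Fixpoint is_node (t : btree) (p : npath) : bool :=
  match p, t with
  | [::], _ => true
  | b :: p', BNode l r => is_node (if b then r else l) p'
  | _ :: _, BLeaf => false
  end.

(* All nodes of t (a duplicate-free list), so |V(t)| = size (nodes t). *)
Fixpoint nodes (t : btree) : seq npath :=
  [::] :: match t with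
          | BLeaf => [::]
          | BNode l r => map (cons false) (nodes l) ++ map (cons true) (nodes r)
          end.

Fixpoint leaves (t : btree) : seq npath :=
  match t with
  | BLeaf => [:: [::]]
  | BNode l r => map (cons false) (leaves l) ++ map (cons true) (leaves r)
  end.

(* The leaf of t labelled by vertex k : 'I_n (the (k+1)-th leaf from the left). *)
Definition leaf (t : btree) (k : nat) : npath := nth [::] (leaves t) k.

(* depth = maximum number of nodes on a root-to-leaf npath *)
Fixpoint depth (t : btree) : nat :=
  match t with
  | BLeaf => 1
  | BNode l r => (maxn (depth l) (depth r)).+1
  end.

Fixpoint lexle (q p : npath) : bool :=
  match q, p with
  | b :: q', c :: p' => (~~ b && c) || ((b == c) && lexle q' p')
  | _, _ => true
  end.

(* complete: all levels filled except possibly the last, whose nodes are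
   left-aligned.  Level l consists of the nodes at paths of length l. *)
Definition complete (t : btree) : Prop :=
  (forall p : npath, size p < (depth t).-1 -> is_node t p) /\
  (forall p q : npath, size p = (depth t).-1 -> size q = size p ->
      lexle q p -> is_node t p -> is_node t q).

Definition anc (u v : npath) : bool := prefix u v.
Definition sanc (u v : npath) : bool := prefix u v && (u != v).

Definition same_pair (u v u' v' : npath) : bool :=
  ((u == u') && (v == v')) || ((u == v') && (v == u')).
Definition ple (u v u' v' : npath) : bool :=
  (anc u u' && anc v v') || (anc v u' && anc u v').
Definition plt (u v u' v' : npath) : bool :=
  ple u v u' v' && ~~ same_pair u v u' v'.

Definition transversal (t : btree) (u v : npath) : bool :=
  [&& is_node t u, is_node t v, u != v, ~~ anc u v & ~~ anc v u].

Definition crossing (a b a' b' : npath) : bool :=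
  [|| sanc a a' && sanc b' b, sanc b a' && sanc b' a,
      sanc a b' && sanc a' b | sanc b b' && sanc a' a].

(* A set of unordered pairs of nodes is represented by a relation S;
   the unordered pair {u,v} belongs to it iff S u v || S v u. *)
Definition inP (S : rel npath) (u v : npath) : bool := S u v || S v u.

Definition signed_tree_model (t : btree) (A B : rel npath) : Prop :=
  (forall u v, A u v -> transversal t u v) /\
  (forall u v, B u v -> transversal t u v) /\
  (forall u v, ~~ (inP A u v && inP B u v)) /\
  (forall a b a' b', inP A a b || inP B a b -> inP A a' b' || inP B a' b' ->
     ~~ crossing a b a' b').

Definition model_adj (A B : rel npath) (u v : npath) : Prop :=
  exists u' v', inP B u' v' /\ ple u' v' u v /\
    ~ (exists u'' v'', inP A u'' v'' /\ plt u' v' u'' v'' /\ ple u'' v'' u v).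

Definition models (n : nat) (t : btree) (A B : rel npath) (G : rel 'I_n) : Prop :=
  forall i j : 'I_n, i != j -> (G i j <-> model_adj A B (leaf t i) (leaf t j)).

Definition clean (t : btree) (A B : rel npath) : Prop :=
  forall p : npath, is_node t (rcons p false) ->
    inP A (rcons p false) (rcons p true) || inP B (rcons p false) (rcons p true).

(* |A ∪ B| : number of unordered pairs of distinct nodes in A ∪ B *)
Definition pair_card (t : btree) (A B : rel npath) : nat :=
  size [seq uv <- [seq (u, v) | u <- nodes t, v <- nodes t] |
        (index uv.1 (nodes t) < index uv.2 (nodes t)) &&
        (inP A uv.1 uv.2 || inP B uv.1 uv.2)].

Definition sparse (c : R) (t : btree) (A B : rel npath) : Prop :=
  Rle (INR (pair_card t A B)) (Rmult c (INR (size (nodes t)))).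

Definition log2 (x : R) : R := Rdiv (ln x) (ln (INR 2)).

(* Each pair {u,v} of A(T) ∪ B(T) is simulated in Rt by the pairs {a,b} in which a and b are
   maximal nodes of Rt all of whose leaves lie below u, resp. v.  The leaves below a node of T
   form an interval, and an interval of leaves of a tree of depth D is covered by at most
   2(D-2) maximal subtrees, hence by at most 2 log n of them in the complete tree Rt.  So every
   pair of T yields at most 4 log^2 n pairs of Rt, while T and Rt both have 2n-1 nodes.
   A pair of Rt may arise from several pairs of T; these form a chain by non-crossing, and the
   greatest of them gives the sign.  Adjacency is preserved because, for two leaves, the
   greatest pair of Rt below them arises from the greatest pair of T below them. *)

From Pilot Require Import Defs.
From Stdlib Require Import Reals Lra.
From mathcomp Require Import all_boot zify.

Set Implicit Arguments.
Unset Strict Implicit.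
Unset Printing Implicit Defensive.

Section Prefix.
Variable X : eqType.
Implicit Types s t u : seq X.

Lemma prefix_size_eq s t : prefix s t -> size t <= size s -> s = t.
Proof.
by rewrite prefixE => /eqP hs ht; rewrite -hs take_oversize.
Qed.

Lemma prefix_anti s t : prefix s t -> prefix t s -> s = t.
Proof. by move=> hst /size_prefix; apply: prefix_size_eq. Qed.

Lemma prefix_total s t u : prefix s u -> prefix t u -> prefix s t || prefix t s.
Proof.
elim: u s t => [|x u IH] [|y s] [|z t] //=; rewrite ?prefix0s ?orbT //.
by move=> /andP[/eqP -> hs] /andP[/eqP -> ht]; rewrite eqxx /=; apply: IH.
Qed.

End Prefix.

Implicit Types (t l r : btree) (S : pred nat) (a c p u v x : npath).

Lemma prefix_split (x y : npath) : ~~ prefix x y -> ~~ prefix y x ->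
  exists p b, prefix (rcons p b) x && prefix (rcons p (~~ b)) y.
Proof.
elim: x y => [|c x IH] [|d y] //=; rewrite ?prefix0s //.
have [-> | hcd] /= := eqVneq c d => hxy hyx.
  have [p [b hp]] := IH y hxy hyx.
  by exists (d :: p), b; rewrite /= !eqxx.
exists [::], c; rewrite /= !prefix0s eqxx /= andbT.
by case: c d hcd => [] [].
Qed.

Definition nleaves t := size (leaves t).
Arguments nleaves : simpl never.

Lemma nleaves_leaf : nleaves BLeaf = 1.
Proof. by []. Qed.

Lemma nleaves_node l r : nleaves (BNode l r) = nleaves l + nleaves r.
Proof. by rewrite /nleaves /= size_cat !size_map. Qed.

Lemma nleaves_gt0 t : 0 < nleaves t.
Proof. by elim: t => //= l IHl r IHr; rewrite nleaves_node addn_gt0 IHl. Qed.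

Lemma leaf_node l r k : k < nleaves (BNode l r) ->
  leaf (BNode l r) k =
  if k < nleaves l then false :: leaf l k else true :: leaf r (k - nleaves l).
Proof.
rewrite nleaves_node /leaf /= nth_cat size_map -/(nleaves l) => hk.
case: ifP => hkl; rewrite (nth_map [::]) //.
by rewrite -/(nleaves r); lia.
Qed.

Lemma is_node_leaf t k : k < nleaves t -> is_node t (leaf t k).
Proof.
elim: t k => [|l IHl r IHr] k /=; first by rewrite /leaf; case: k.
move=> hk; rewrite leaf_node //; case: ifP => hkl /=; first exact: IHl.
by apply: IHr; rewrite nleaves_node in hk; lia.
Qed.

Lemma leaf_prefix_inj t k k' : k < nleaves t -> k' < nleaves t ->
  prefix (leaf t k) (leaf t k') -> k = k'.
Proof.
elim: t k k' => [|l IHl r IHr] k k' /=; first by rewrite /nleaves /=; lia.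
move=> hk hk'; rewrite !leaf_node //.
rewrite nleaves_node in hk hk'.
case: ifP => h1; case: ifP => h2 //=; first exact: IHl.
by move/IHr; lia.
Qed.

Lemma is_node_prefix t p c : is_node t p -> prefix c p -> is_node t c.
Proof.
elim: t p c => [|l IHl r IHr] [|b p] [|b' c] //=.
by move=> hp /andP[/eqP -> hc]; case: b hp => hp; [apply: IHr hp hc|apply: IHl hp hc].
Qed.

Lemma is_node_above_leaf t p : is_node t p ->
  exists2 k, k < nleaves t & prefix p (leaf t k).
Proof.
elim: t p => [|l IHl r IHr] [|[] p] //=;
  try by exists 0; rewrite ?nleaves_gt0 ?prefix0s.
- move=> /IHr[k hk hp]; have hlk : nleaves l + k < nleaves (BNode l r).
    by rewrite nleaves_node ltn_add2l.
  by exists (nleaves l + k); rewrite // leaf_node // ifF ?addKn //; lia.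
- move=> /IHl[k hk hp]; have hkl : k < nleaves (BNode l r).
    by rewrite nleaves_node; lia.
  by exists k; rewrite // leaf_node // hk.
Qed.

Definition leaves_below t u : pred nat := fun k => prefix u (leaf t k).

Lemma leaves_below_prefix t u u' :
  prefix u' u -> {subset leaves_below t u <= leaves_below t u'}.
Proof. by move=> h k; apply: prefix_trans. Qed.

Definition segment (lo hi : nat) : pred nat := fun k => lo <= k < hi.

Lemma segment_shift lo hi m k : segment lo hi (m + k) = segment (lo - m) (hi - m) k.
Proof. rewrite /segment; lia. Qed.

Lemma leaves_below_interval t u : exists lo hi, hi <= nleaves t /\
  forall k, k < nleaves t -> leaves_below t u k = segment lo hi k.
Proof.
rewrite /leaves_below /segment.
elim: t u => [|l IHl r IHr] [|b u].
- by exists 0, 1; split => // k; rewrite prefix0s nleaves_leaf; lia.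
- by exists 0, 0; split => // -[].
- by exists 0, (nleaves (BNode l r)); split => // k ->; rewrite prefix0s.
have hlr := nleaves_node l r.
case: b.
  have [lo [hi [hhi h]]] := IHr u; exists (nleaves l + lo), (nleaves l + hi).
  split=> [|k hk]; first lia.
  rewrite leaf_node //; case: ifP => hkl /=; first lia.
  by rewrite h; lia.
have [lo [hi [hhi h]]] := IHl u; exists lo, hi; split=> [|k hk]; first lia.
by rewrite leaf_node //; case: ifP => hkl /=; [rewrite h | lia].
Qed.

Lemma mem_nodes t p : (p \in nodes t) = is_node t p.
Proof.
elim: t p => [|l IHl r IHr] [|[] p] //=; rewrite in_cons /= mem_cat.
- have -> : (true :: p \in map (cons false) (nodes l)) = false by apply/mapP => -[].
  by rewrite (mem_map (fun x y => _)) ?IHr //; move=> x y [].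
- have -> : (false :: p \in map (cons true) (nodes r)) = false by apply/mapP => -[].
  by rewrite orbF (mem_map (fun x y => _)) ?IHl //; move=> x y [].
Qed.

Lemma uniq_nodes t : uniq (nodes t).
Proof.
elim: t => [|l IHl r IHr] //=.
rewrite cat_uniq !map_inj_uniq //; try by move=> x y [].
rewrite IHl IHr mem_cat /= andbT; apply/andP; split.
  by apply/negP => /orP[] /mapP [].
by apply/hasPn => x /mapP [y _ ->]; apply/mapP => -[].
Qed.

Lemma size_nodes t : size (nodes t) = (nleaves t).*2.-1.
Proof.
elim: t => [|l IHl r IHr] //=; rewrite size_cat !size_map IHl IHr nleaves_node.
by have := nleaves_gt0 l; have := nleaves_gt0 r; lia.
Qed.

Definition covers t (S : pred nat) (a : npath) : bool :=
  all (fun k => prefix a (leaf t k) ==> S k) (iota 0 (nleaves t)).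

Lemma coversP t S a :
  reflect (forall k, k < nleaves t -> prefix a (leaf t k) -> S k) (covers t S a).
Proof.
apply: (iffP allP) => h k; last by rewrite mem_iota => hk; apply/implyP; apply: h.
by move=> hk hp; move: (h k); rewrite mem_iota hk hp; apply.
Qed.

Lemma covers_left l r S c : covers (BNode l r) S (false :: c) = covers l S c.
Proof.
apply/coversP/coversP => h k hk; last by rewrite leaf_node //; case: ifP => //= *; apply: h.
by move=> hp; apply: h; rewrite ?leaf_node ?hk // nleaves_node; lia.
Qed.

Lemma covers_right l r S c :
  covers (BNode l r) S (true :: c) = covers r (fun k => S (nleaves l + k)) c.
Proof.
have hlr := nleaves_node l r.
apply/coversP/coversP => h k hk.
  move=> hp; apply: h; first lia.
  by rewrite leaf_node ?ifF ?addKn //; lia.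
rewrite leaf_node //; case: ifP => //= hkl hp.
have -> : k = nleaves l + (k - nleaves l) by lia.
by apply: h => //; lia.
Qed.

Lemma covers_ext t S1 S2 a : (forall k, k < nleaves t -> S1 k = S2 k) ->
  covers t S1 a = covers t S2 a.
Proof.
by move=> h; apply/coversP/coversP => h' k hk hp; [rewrite -h | rewrite h] => //; apply: h'.
Qed.

Lemma covers_sub t (S1 S2 : pred nat) a :
  {subset S1 <= S2} -> covers t S1 a -> covers t S2 a.
Proof. by move=> h12 /coversP h; apply/coversP => k hk hp; apply: h12; apply: h. Qed.

Lemma covers_root_segment t lo hi :
  covers t (segment lo hi) [::] = (lo == 0) && (nleaves t <= hi).
Proof.
have ht := nleaves_gt0 t.
apply/coversP/andP => [h|[/eqP -> hhi] k hk _]; last by rewrite /segment; lia.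
have := h 0 ht (prefix0s _); have := h (nleaves t).-1 ltac:(lia) (prefix0s _).
by rewrite /segment; lia.
Qed.

(* [take j a], for [j < size a], ranges over the strict ancestors of [a]. *)
Definition max_covered t S a :=
  [&& is_node t a, covers t S a & all (fun j => ~~ covers t S (take j a)) (iota 0 (size a))].

Lemma max_covered_node t S a : max_covered t S a -> is_node t a.
Proof. by case/and3P. Qed.

Lemma max_covered_leaf t S a k :
  max_covered t S a -> k < nleaves t -> prefix a (leaf t k) -> S k.
Proof. by case/and3P => _ /coversP h _; apply: h. Qed.

Lemma max_covered_strict t S a c :
  max_covered t S a -> prefix c a -> c != a -> ~~ covers t S c.
Proof.
move=> /and3P[_ _ /allP h] hca hne; have hsz := size_prefix hca.
have hlt : size c < size a.
  by rewrite ltn_neqAle hsz andbT; apply: contra hne => /eqP e; rewrite (prefix_size_eq hca) ?e.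
by move: hca; rewrite prefixE => /eqP {1}<-; apply: h; rewrite mem_iota.
Qed.

Lemma max_covered_exists t S k : k < nleaves t -> S k ->
  exists2 a, max_covered t S a & prefix a (leaf t k).
Proof.
move=> hk hS; set x := leaf t k.
have exP : exists j, covers t S (take j x).
  exists (size x); rewrite take_size; apply/coversP => k' hk' hp.
  by rewrite -(leaf_prefix_inj hk hk' hp).
case: (ex_minnP exP) => j hj hmin.
exists (take j x); last exact: prefix_take.
rewrite /max_covered hj (is_node_prefix (is_node_leaf hk) (prefix_take _ _)) /=.
apply/allP => i; rewrite mem_iota size_take => /andP[_ hi].
rewrite take_takel; last by move: hi; case: ifP; lia.
by apply/negP => /hmin; move: hi; case: ifP; lia.
Qed.

Lemma max_covered_prefix t (S S' : pred nat) a a' x : {subset S <= S'} ->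
  max_covered t S' a' -> max_covered t S a -> prefix a' x -> prefix a x -> prefix a' a.
Proof.
move=> hSS ha' ha hx' hx; have /orP[//|haa'] := prefix_total hx' hx.
have [-> //|hne] := eqVneq a a'; first exact: prefix_refl.
by move: (max_covered_strict ha' haa' hne); case/and3P: ha => _ /(covers_sub hSS) ->.
Qed.

Fixpoint max_covered_nodes t S : seq npath :=
  if covers t S [::] then [:: [::]] else
  match t with
  | BLeaf => [::]
  | BNode l r => map (cons false) (max_covered_nodes l S) ++
                 map (cons true) (max_covered_nodes r (fun k => S (nleaves l + k)))
  end.

Lemma mem_max_covered_nodes t S a : max_covered t S a -> a \in max_covered_nodes t S.
Proof.
elim: t S a => [|l IHl r IHr] S [|b a] /and3P[ha hcov hmax] //=; try by rewrite hcov inE.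
have hcov0 : ~~ covers (BNode l r) S [::] by move: hmax => /= /andP[].
rewrite (negbTE hcov0) mem_cat.
have {}hmax : all (fun j => ~~ covers (BNode l r) S (b :: take j a)) (iota 0 (size a)).
  by move: hmax => /= /andP[_]; rewrite (iotaDl 1 0) all_map.
case: b ha hcov hmax => ha hcov hmax; apply/orP; [right|left];
  rewrite (mem_map (fun x y => _)) //; try by move=> x y [].
- apply: IHr; apply/and3P; split; [exact: ha | by rewrite -covers_right |].
  by apply: sub_all hmax => j; rewrite covers_right.
- apply: IHl; apply/and3P; split; [exact: ha | by rewrite -(covers_left _ r) |].
  by apply: sub_all hmax => j; rewrite covers_left.
Qed.

Lemma max_covered_nodes_ext t S1 S2 : (forall k, k < nleaves t -> S1 k = S2 k) ->
  max_covered_nodes t S1 = max_covered_nodes t S2.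
Proof.
elim: t S1 S2 => [|l IHl r IHr] S1 S2 h /=; rewrite (covers_ext _ h) //.
have hlr := nleaves_node l r.
by rewrite (IHl S1 S2) ?(IHr _ (fun k => S2 (nleaves l + k))) // => k hk; apply: h; lia.
Qed.

Lemma max_covered_nodes_empty t S : (forall k, k < nleaves t -> ~~ S k) ->
  max_covered_nodes t S = [::].
Proof.
have hroot t' S' : (forall k, k < nleaves t' -> ~~ S' k) -> covers t' S' [::] = false.
  move=> h; apply/negP => /coversP h0.
  by have := h 0 (nleaves_gt0 t'); rewrite h0 ?nleaves_gt0 ?prefix0s.
elim: t S => [|l IHl r IHr] S h /=; rewrite hroot //.
have hlr := nleaves_node l r.
by rewrite IHl ?IHr // => k hk; apply: h; lia.
Qed.

Lemma max_covered_nodes_full t S : (forall k, k < nleaves t -> S k) ->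
  max_covered_nodes t S = [:: [::]].
Proof. by case: t => [|l r] h /=; rewrite ifT //; apply/coversP => k hk _; apply: h. Qed.

Lemma depth_gt0 t : 0 < depth t.
Proof. by case: t. Qed.

Lemma depth_leaf t : depth t = 1 -> t = BLeaf.
Proof. by case: t => //= l r [] hlr; have := depth_gt0 l; lia. Qed.

(* An initial or a final segment of the leaves needs at most one maximal subtree per level
   below the root. *)
Lemma size_max_covered_nodes_prefix t hi :
  size (max_covered_nodes t (segment 0 hi)) <= maxn 1 (depth t).-1.
Proof.
elim: t hi => [|l IHl r IHr] hi /=; first by case: ifP.
case: ifP => hcov //=; first lia.
have hlr := nleaves_node l r.
rewrite (@max_covered_nodes_ext r _ (segment 0 (hi - nleaves l))); last first.
  by move=> k _; apply: segment_shift.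
rewrite size_cat !size_map.
have [hhi|hhi] := leqP hi (nleaves l).
  rewrite (@max_covered_nodes_empty r) /=; last by move=> k _; rewrite /segment; lia.
  by have := IHl hi; rewrite /npath; lia.
rewrite (@max_covered_nodes_full l); last by move=> k hk; rewrite /segment; lia.
have hr : 1 < depth r.
  rewrite ltn_neqAle depth_gt0 andbT eq_sym; apply/eqP => /depth_leaf er.
  by move: hcov; rewrite covers_root_segment hlr er nleaves_leaf; lia.
by have := IHr (hi - nleaves l); rewrite [size [:: _]]/= /npath; lia.
Qed.

Lemma size_max_covered_nodes_suffix t lo hi : nleaves t <= hi ->
  size (max_covered_nodes t (segment lo hi)) <= maxn 1 (depth t).-1.
Proof.
elim: t lo hi => [|l IHl r IHr] lo hi /=; first by case: ifP.
case: ifP => hcov //= hhi; first lia.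
have hlr := nleaves_node l r.
rewrite (@max_covered_nodes_ext r _ (segment (lo - nleaves l) (hi - nleaves l))); last first.
  by move=> k _; apply: segment_shift.
rewrite size_cat !size_map.
have [hlo|hlo] := leqP (nleaves l) lo.
  rewrite (@max_covered_nodes_empty l) /=; last by move=> k hk; rewrite /segment; lia.
  by have := IHr (lo - nleaves l) (hi - nleaves l); rewrite /npath; lia.
rewrite (@max_covered_nodes_full r); last by move=> k hk; rewrite /segment; lia.
have hl : 1 < depth l.
  rewrite ltn_neqAle depth_gt0 andbT eq_sym; apply/eqP => /depth_leaf el.
  by move: hcov hlo hhi; rewrite covers_root_segment hlr el nleaves_leaf; lia.
by have := IHl lo hi; rewrite [size [:: _]]/= /npath; lia.
Qed.

(* An interval of leaves is the disjoint union of at most [2 (depth t - 2)]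
   maximal subtrees: a final segment of the left subtree and an initial one of the right. *)
Lemma size_max_covered_nodes_segment t lo hi :
  size (max_covered_nodes t (segment lo hi)) <= maxn 1 (2 * (depth t - 2)).
Proof.
elim: t lo hi => [|l IHl r IHr] lo hi /=; first by case: ifP.
case: ifP => hcov //=; first lia.
have hlr := nleaves_node l r.
rewrite (@max_covered_nodes_ext r _ (segment (lo - nleaves l) (hi - nleaves l))); last first.
  by move=> k _; apply: segment_shift.
rewrite size_cat !size_map.
have [hhi|hhi] := leqP hi (nleaves l).
  rewrite (@max_covered_nodes_empty r) /=; last by move=> k _; rewrite /segment; lia.
  by have := IHl lo hi; rewrite /npath; lia.
have [hlo|hlo] := leqP (nleaves l) lo.
  rewrite (@max_covered_nodes_empty l) /=; last by move=> k hk; rewrite /segment; lia.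
  by have := IHr (lo - nleaves l) (hi - nleaves l); rewrite /npath; lia.
have := @size_max_covered_nodes_suffix l lo hi (ltnW hhi).
rewrite (_ : lo - nleaves l = 0); last lia.
have := @size_max_covered_nodes_prefix r (hi - nleaves l).
have hd : 1 < maxn (depth l) (depth r).
  rewrite ltnNge geq_max; apply/negP => /andP[hl hr].
  have el : l = BLeaf by apply: depth_leaf; have := depth_gt0 l; lia.
  have er : r = BLeaf by apply: depth_leaf; have := depth_gt0 r; lia.
  by move: hcov hlo hhi; rewrite covers_root_segment hlr el er nleaves_leaf; lia.
move: hd; clear; move: (size _) (size _) (depth l) (depth r) => x y dl dr; lia.
Qed.

Definition node_pairs t : seq (npath * npath) := [seq (u, v) | u <- nodes t, v <- nodes t].

Definition inAB (A B : rel npath) u v := inP A u v || inP B u v.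

Lemma inPC (S : rel npath) u v : inP S u v = inP S v u.
Proof. by rewrite /inP orbC. Qed.

Lemma inABC A B u v : inAB A B u v = inAB A B v u.
Proof. by rewrite /inAB inPC [inP B _ _]inPC. Qed.

Lemma transversalC t u v : Defs.transversal t u v = Defs.transversal t v u.
Proof.
rewrite /Defs.transversal eq_sym.
by case: (is_node t u); case: (is_node t v); case: (u == v); case: (anc u v); case: (anc v u).
Qed.

Lemma same_pair_inP (S : rel npath) u v u' v' :
  same_pair u v u' v' -> inP S u v = inP S u' v'.
Proof. by case/orP=> /andP[/eqP -> /eqP ->] //; rewrite inPC. Qed.

Lemma ple_anti u v u' v' : ple u v u' v' -> ple u' v' u v -> same_pair u v u' v'.
Proof.
rewrite /ple /same_pair /anc => /orP[]/andP[h1 h2] /orP[]/andP[h3 h4].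
- by rewrite (prefix_anti h1 h3) (prefix_anti h2 h4) !eqxx.
- have e1 : u = u' := prefix_anti h1 (prefix_trans h4 (prefix_trans h2 h3)).
  have e2 : v = v' := prefix_anti h2 (prefix_trans h3 (prefix_trans h1 h4)).
  by rewrite e1 e2 !eqxx.
- have e1 : u = u' := prefix_anti (prefix_trans h2 (prefix_trans h4 h1)) h3.
  have e2 : v = v' := prefix_anti (prefix_trans h1 (prefix_trans h3 h2)) h4.
  by rewrite e1 e2 !eqxx.
- by rewrite (prefix_anti h1 h4) (prefix_anti h2 h3) !eqxx orbT.
Qed.

Lemma ple_of_prefix (S : rel npath) x y u v : (forall p q, S p q = S q p) ->
  (forall p q, S p q -> prefix p x -> prefix q y -> prefix p u && prefix q v) ->
  forall p q, S p q -> ple p q x y -> ple p q u v.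
Proof.
move=> hS hmax p q hpq; rewrite /ple /anc => /orP[]/andP[h1 h2].
  by rewrite hmax.
by rewrite (hmax q p) ?orbT // -hS.
Qed.

Lemma model_adj_greatest (A B : rel npath) x y p q :
  inAB A B p q -> ~~ (inP A p q && inP B p q) -> ple p q x y ->
  (forall p' q', inAB A B p' q' -> ple p' q' x y -> ple p' q' p q) ->
  (model_adj A B x y <-> inP B p q).
Proof.
move=> hpq hAB hle hmax; split.
  move=> [u' [v' [hB [hl hno]]]]; case/orP: hpq => // hA.
  exfalso; apply: hno; exists p, q; split => //; split => //.
  have hup := hmax u' v' (introT orP (or_intror hB)) hl.
  rewrite /plt hup /=; apply/negP => hs.
  by move: hAB; rewrite hA -(same_pair_inP B hs) hB.
move=> hB; exists p, q; do 2!split => //.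
move=> [u'' [v'' [hA [/andP[hlt hne] hl]]]].
have hs := ple_anti hlt (hmax u'' v'' (introT orP (or_introl hA)) hl).
by move: hAB; rewrite hB andbT (same_pair_inP A hs) hA.
Qed.

Section SignedTreeModel.
Variables (t : btree) (A B : rel npath).
Hypothesis model : signed_tree_model t A B.

Lemma model_transversal u v : inAB A B u v -> Defs.transversal t u v.
Proof.
case: model => [hA [hB _]]; rewrite /inAB /inP => /orP[]/orP[] h.
- exact: hA.
- by rewrite transversalC; apply: hA.
- exact: hB.
- by rewrite transversalC; apply: hB.
Qed.

Lemma model_pair_nodes u v : inAB A B u v -> (u, v) \in node_pairs t.
Proof.
by move=> /model_transversal /and5P[hu hv _ _ _]; apply: allpairs_f; rewrite mem_nodes.
Qed.

Lemma model_noncrossing u v u' v' : inAB A B u v -> inAB A B u' v' -> ~~ crossing u v u' v'.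
Proof. by case: model => _ [_ [_]]; apply. Qed.

(* This is where non-crossing is used. *)
Lemma model_pairs_below_chain x y u v u' v' : inAB A B u v -> inAB A B u' v' ->
  prefix u x -> prefix v y -> prefix u' x -> prefix v' y ->
  (prefix u u' && prefix v v') || (prefix u' u && prefix v' v).
Proof.
move=> h h' hu hv hu' hv'.
have /orP[a1|a1] := prefix_total hu hu'; have /orP[a2|a2] := prefix_total hv hv'.
- by rewrite a1 a2.
- have [e|n1] := eqVneq u u'; first by rewrite e prefix_refl a2 orbT.
  have [e|n2] := eqVneq v v'; first by rewrite e a1 prefix_refl.
  by have := model_noncrossing h h'; rewrite /crossing /sanc a1 a2 n1 eq_sym n2.
- have [e|n1] := eqVneq u u'; first by rewrite e prefix_refl a2.
  have [e|n2] := eqVneq v v'; first by rewrite e a1 prefix_refl orbT.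
  by have := model_noncrossing h' h; rewrite /crossing /sanc a1 a2 n2 eq_sym n1.
- by rewrite a1 a2 orbT.
Qed.

Lemma model_greatest_pair_below x y :
  (exists u v, [/\ inAB A B u v, prefix u x & prefix v y]) ->
  exists u v, [/\ inAB A B u v, prefix u x, prefix v y &
    forall u' v', inAB A B u' v' -> prefix u' x -> prefix v' y -> prefix u' u && prefix v' v].
Proof.
move=> hex.
pose below m (uv : npath * npath) :=
  [&& inAB A B uv.1 uv.2, prefix uv.1 x, prefix uv.2 y & size uv.1 + size uv.2 == m].
pose P m := has (below m) (node_pairs t).
have exP : exists m, P m.
  case: hex => u [v [h1 h2 h3]]; exists (size u + size v); apply/hasP; exists (u, v).
    exact: model_pair_nodes.
  by rewrite /below /= h1 h2 h3 eqxx.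
have ubP m : P m -> m <= size x + size y.
  move=> /hasP [[u v] _] /and4P[_ /size_prefix h1 /size_prefix h2 /eqP <-] /=.
  by move: h1 h2 => /= h1 h2; lia.
case: (ex_maxnP exP ubP) => m /hasP [[u v] _] /and4P[h1 h2 h3 /eqP hm] hmax.
move: h1 h2 h3 hm => /= h1 h2 h3 hm.
exists u, v; split => // u' v' h1' h2' h3'.
have /orP[/andP[a1 a2]|//] := model_pairs_below_chain h1 h1' h2 h3 h2' h3'.
have : P (size u' + size v').
  apply/hasP; exists (u', v'); first exact: model_pair_nodes.
  by rewrite /below /= h1' h2' h3' eqxx.
move/hmax; rewrite -hm => hs.
have /= s1 := size_prefix a1; have /= s2 := size_prefix a2.
have -> : u = u' by apply: prefix_size_eq a1 _ => /=; lia.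
have -> : v = v' by apply: prefix_size_eq a2 _ => /=; lia.
by rewrite !prefix_refl.
Qed.

(* In a clean model two distinct leaves lie below the sibling pair at their branching point. *)
Lemma clean_pair_below_leaves i j : clean t A B -> i < nleaves t -> j < nleaves t -> i != j ->
  exists u v, [/\ inAB A B u v, prefix u (leaf t i) & prefix v (leaf t j)].
Proof.
move=> hclean hi hj hij.
have [p [b /andP[hp1 hp2]]] : exists p b,
    prefix (rcons p b) (leaf t i) && prefix (rcons p (~~ b)) (leaf t j).
  by apply: prefix_split; apply: contra hij => /leaf_prefix_inj ->.
have hsib := hclean p.
case: b hp1 hp2 => /= hp1 hp2.
- exists (rcons p true), (rcons p false); rewrite inABC; split => //.
  by apply: hsib; apply: is_node_prefix (is_node_leaf hj) hp2.
- exists (rcons p false), (rcons p true); split => //.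
  by apply: hsib; apply: is_node_prefix (is_node_leaf hi) hp1.
Qed.

End SignedTreeModel.

Lemma leaves_below_disjoint t u v k :
  Defs.transversal t u v -> leaves_below t u k -> leaves_below t v k -> False.
Proof.
move=> /and5P[_ _ _ huv hvu] hu hv.
by have := prefix_total hu hv; rewrite /anc in huv hvu; rewrite (negbTE huv) (negbTE hvu).
Qed.

Section Transfer.
Variables (T Rt : btree) (A B : rel npath).
Hypothesis model : signed_tree_model T A B.

Definition generates a b u v := [&& inAB A B u v,
  max_covered Rt (leaves_below T u) a & max_covered Rt (leaves_below T v) b].

(* The generators of a pair form a chain (model_pairs_below_chain); the greatest one
   decides whether the pair goes to [transfer A] or to [transfer B]. *)
Definition greatest_generator a b u v := generates a b u v &&
  all (fun uv => generates a b uv.1 uv.2 ==> prefix uv.1 u && prefix uv.2 v) (node_pairs T).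

Definition transfer (S : rel npath) : rel npath := fun a b =>
  has (fun uv => greatest_generator a b uv.1 uv.2 && inP S uv.1 uv.2) (node_pairs T).

Lemma generatesC a b u v : generates a b u v = generates b a v u.
Proof. by rewrite /generates inABC; congr (_ && _); apply: andbC. Qed.

Lemma generates_pair_nodes a b u v : generates a b u v -> (u, v) \in node_pairs T.
Proof. by case/and3P => /(model_pair_nodes model). Qed.

Lemma greatest_generatorP a b u v :
  greatest_generator a b u v <-> generates a b u v /\
    forall u' v', generates a b u' v' -> prefix u' u && prefix v' v.
Proof.
split=> [/andP[hg /allP h]|[hg h]].
  by split => // u' v' hg'; have := h _ (generates_pair_nodes hg'); rewrite hg'.
by rewrite /greatest_generator hg; apply/allP => -[u' v'] _; apply/implyP/h.
Qed.

Lemma greatest_generatorC a b u v : greatest_generator a b u v -> greatest_generator b a v u.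
Proof.
move=> /greatest_generatorP [hg h]; apply/greatest_generatorP; rewrite -generatesC.
by split => // u' v'; rewrite -generatesC andbC; apply: h.
Qed.

Lemma greatest_generator_uniq a b u v u' v' :
  greatest_generator a b u v -> greatest_generator a b u' v' -> u = u' /\ v = v'.
Proof.
move=> /greatest_generatorP [g1 h1] /greatest_generatorP [g2 h2].
have /andP[a1 a2] := h1 _ _ g2; have /andP[a3 a4] := h2 _ _ g1.
by split; apply: prefix_anti.
Qed.

Lemma transferP (S : rel npath) a b :
  reflect (exists u v, greatest_generator a b u v /\ inP S u v) (transfer S a b).
Proof.
apply: (iffP hasP) => [[[u v] _ /andP[h1 h2]]|[u [v [h1 h2]]]]; first by exists u, v.
exists (u, v); last by rewrite /= h1 h2.
by case/greatest_generatorP: h1 => /generates_pair_nodes.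
Qed.

Lemma transferC (S : rel npath) a b : transfer S a b = transfer S b a.
Proof.
by apply/transferP/transferP => -[u [v [h1 h2]]];
  exists v, u; rewrite inPC; split => //; apply: greatest_generatorC.
Qed.

Lemma inP_transfer (S : rel npath) a b : inP (transfer S) a b = transfer S a b.
Proof. by rewrite /inP transferC orbb. Qed.

Lemma inP_transfer_greatest (S : rel npath) a b u v :
  greatest_generator a b u v -> inP (transfer S) a b = inP S u v.
Proof.
move=> hg; rewrite inP_transfer; apply/transferP/idP => [[u' [v' [hg' hS]]]|hS].
  by have [-> ->] := greatest_generator_uniq hg hg'.
by exists u, v.
Qed.

Lemma transfer_generated a b :
  inAB (transfer A) (transfer B) a b -> exists u v, generates a b u v.
Proof.
rewrite /inAB !inP_transfer => /orP[] /transferP [u [v [/greatest_generatorP [hg _] _]]];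
  by exists u, v.
Qed.

Lemma generated_transversal a b u v : generates a b u v -> Defs.transversal Rt a b.
Proof.
move=> /and3P[huv ha hb]; have htr := model_transversal model huv.
have na := max_covered_node ha; have nb := max_covered_node hb.
have [ka hka hpa] := is_node_above_leaf na; have [kb hkb hpb] := is_node_above_leaf nb.
have ua := max_covered_leaf ha hka hpa; have vb := max_covered_leaf hb hkb hpb.
rewrite /Defs.transversal na nb /anc /=; apply/and3P; split.
- apply/negP => /eqP eab; apply: (leaves_below_disjoint htr ua).
  by apply: max_covered_leaf hb hka _; rewrite -eab.
- apply/negP => h; apply: (leaves_below_disjoint htr _ vb).
  exact: max_covered_leaf ha hkb (prefix_trans h hpb).
- apply/negP => h; apply: (leaves_below_disjoint htr ua).
  exact: max_covered_leaf hb hka (prefix_trans h hpa).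
Qed.

(* A crossing in [Rt] would force either a non-maximal covered node or a crossing in [T]. *)
Lemma transfer_noncrossing a b a' b' :
  inAB (transfer A) (transfer B) a b -> inAB (transfer A) (transfer B) a' b' ->
  sanc a a' -> sanc b' b -> False.
Proof.
move=> h h' /andP[haa' naa'] /andP[hbb' nbb'].
have [u [v /and3P[huv ha hb]]] := transfer_generated h.
have [u' [v' /and3P[huv' ha' hb']]] := transfer_generated h'.
have [k hk hpk] := is_node_above_leaf (max_covered_node ha').
have [k' hk' hpk'] := is_node_above_leaf (max_covered_node hb).
have lu := max_covered_leaf ha hk (prefix_trans haa' hpk).
have lu' := max_covered_leaf ha' hk hpk.
have lv := max_covered_leaf hb hk' hpk'.
have lv' := max_covered_leaf hb' hk' (prefix_trans hbb' hpk').
have [hu|hu] := boolP (prefix u' u).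
  apply: (negP (max_covered_strict ha' haa' naa')); case/and3P: ha => _ hca _.
  exact: covers_sub (leaves_below_prefix hu) hca.
have hu2 : prefix u u' by have := prefix_total lu lu'; rewrite (negbTE hu) orbF.
have [hv|hv] := boolP (prefix v v').
  apply: (negP (max_covered_strict hb hbb' nbb')); case/and3P: hb' => _ hcb _.
  exact: covers_sub (leaves_below_prefix hv) hcb.
have hv2 : prefix v' v by have := prefix_total lv lv'; rewrite (negbTE hv).
have nu : u != u' by apply: contraNneq hu => ->; apply: prefix_refl.
have nv : v' != v by apply: contraNneq hv => ->; apply: prefix_refl.
by have := model_noncrossing model huv huv'; rewrite /crossing /sanc hu2 hv2 nu nv.
Qed.

Lemma transfer_signed_tree_model : signed_tree_model Rt (transfer A) (transfer B).
Proof.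
have htr (S : rel npath) : S = A \/ S = B -> forall a b, transfer S a b -> Defs.transversal Rt a b.
  move=> hS a b h; have [u [v /generated_transversal //]] : exists u v, generates a b u v.
  by apply: transfer_generated; rewrite /inAB !inP_transfer; case: hS h => -> ->; rewrite ?orbT.
split; [exact: htr (or_introl _) | split; [exact: htr (or_intror _) | split]].
- move=> a b; rewrite !inP_transfer; apply/negP => /andP[].
  move=> /transferP [u [v [hg hA]]] /transferP [u' [v' [hg' hB]]].
  have [e e'] := greatest_generator_uniq hg hg'; subst u' v'.
  by case: model => _ [_ [/(_ u v)]]; rewrite hA hB.
move=> a b a' b' h h'; apply/negP; rewrite /crossing.
have hC : inAB (transfer A) (transfer B) b a by rewrite inABC.
have hC' : inAB (transfer A) (transfer B) b' a' by rewrite inABC.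
by case/or4P => /andP[] => [|||] /transfer_noncrossing; apply.
Qed.

(* The pair of [Rt] deciding the adjacency of two leaves is generated by the pair of [T]
   deciding it. *)
Lemma transfer_greatest_below i j u v : i < nleaves Rt -> j < nleaves Rt ->
  inAB A B u v -> prefix u (leaf T i) -> prefix v (leaf T j) ->
  (forall u' v', inAB A B u' v' -> prefix u' (leaf T i) -> prefix v' (leaf T j) ->
     prefix u' u && prefix v' v) ->
  exists a b, [/\ greatest_generator a b u v, prefix a (leaf Rt i), prefix b (leaf Rt j) &
    forall a' b', inAB (transfer A) (transfer B) a' b' ->
      prefix a' (leaf Rt i) -> prefix b' (leaf Rt j) -> prefix a' a && prefix b' b].
Proof.
move=> hi hj huv hu hv hmax.
have [a ha hai] := max_covered_exists (S := leaves_below T u) hi hu.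
have [b hb hbj] := max_covered_exists (S := leaves_below T v) hj hv.
exists a, b; split => //.
  apply/greatest_generatorP; split; first by rewrite /generates huv ha hb.
  move=> u' v' /and3P[huv' ha' hb']; apply: hmax => //.
    exact: max_covered_leaf ha' hi hai.
  exact: max_covered_leaf hb' hj hbj.
move=> a' b' /transfer_generated [u' [v' /and3P[huv' ha' hb']]] hai' hbj'.
have /andP[hu' hv'] :=
  hmax u' v' huv' (max_covered_leaf ha' hi hai') (max_covered_leaf hb' hj hbj').
by rewrite (max_covered_prefix (leaves_below_prefix hu') ha' ha hai' hai)
           (max_covered_prefix (leaves_below_prefix hv') hb' hb hbj' hbj).
Qed.

Lemma transfer_models n (G : rel 'I_n) : clean T A B ->
  nleaves T = n -> nleaves Rt = n -> models T A B G -> models Rt (transfer A) (transfer B) G.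
Proof.
move=> hclean hnT hnR hG i j hij; rewrite hG //.
have hiT : i < nleaves T by rewrite hnT.
have hjT : j < nleaves T by rewrite hnT.
have hiR : i < nleaves Rt by rewrite hnR.
have hjR : j < nleaves Rt by rewrite hnR.
have [u [v [huv hu hv hmax]]] :=
  model_greatest_pair_below model (clean_pair_below_leaves hclean hiT hjT hij).
have [a [b [hg ha hb hmaxR]]] := transfer_greatest_below hiR hjR huv hu hv hmax.
have hdisj : ~~ (inP A u v && inP B u v) by case: model => _ [_ []].
rewrite (model_adj_greatest huv hdisj); first last.
- exact: ple_of_prefix (inABC A B) hmax.
- by rewrite /ple /anc hu hv.
rewrite (model_adj_greatest (p := a) (q := b)) ?(inP_transfer_greatest _ hg) //.
- by rewrite /inAB (inP_transfer_greatest A hg) (inP_transfer_greatest B hg).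
- by rewrite /ple /anc ha hb.
- exact: ple_of_prefix (inABC _ _) hmaxR.
Qed.

End Transfer.

(* Keep [(a,b)] if it lies in [Y] and flip it otherwise; since [o a < o b] on [s], this
   orientation is injective. *)
Lemma size_oriented_pairs_le (X : eqType) (o : X -> nat) (s Y : seq (X * X)) : uniq s ->
  (forall ab, ab \in s -> o ab.1 < o ab.2 /\ (ab \in Y \/ (ab.2, ab.1) \in Y)) ->
  size s <= size Y.
Proof.
move=> hs hY; pose f ab := if ab \in Y then ab else (ab.2, ab.1).
rewrite -(size_map f); apply: uniq_leq_size.
  rewrite map_inj_in_uniq // => -[a b] [a' b'] /hY[/= hab _] /hY[/= hab' _].
  by rewrite /f; case: ifP; case: ifP => _ _ /= [e1 e2]; subst; rewrite // ltnNge ltnW in hab.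
move=> _ /mapP[ab /hY[_ hab] ->]; rewrite /f.
by case: ifP => // hn; case: hab => //; rewrite hn.
Qed.

Definition ab_pairs t A B : seq (npath * npath) :=
  [seq uv <- node_pairs t | (index uv.1 (nodes t) < index uv.2 (nodes t)) && inAB A B uv.1 uv.2].

Lemma pair_card_ab_pairs t A B : pair_card t A B = size (ab_pairs t A B).
Proof. by []. Qed.

Lemma uniq_node_pairs t : uniq (node_pairs t).
Proof. by apply: allpairs_uniq; rewrite ?uniq_nodes // => -[a b] [c d] _ _ [-> ->]. Qed.

Section Counting.
Variables (T Rt : btree) (A B : rel npath) (M : nat).
Hypothesis model : signed_tree_model T A B.
Hypothesis size_max_covered : forall u, size (max_covered_nodes Rt (leaves_below T u)) <= M.

Definition generated_pairs : seq (npath * npath) :=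
  flatten [seq [seq (a, b) | a <- max_covered_nodes Rt (leaves_below T uv.1),
                             b <- max_covered_nodes Rt (leaves_below T uv.2)]
          | uv <- ab_pairs T A B].

Lemma size_generated_pairs : size generated_pairs <= M * M * pair_card T A B.
Proof.
rewrite /generated_pairs pair_card_ab_pairs size_flatten /shape -map_comp.
elim: (ab_pairs T A B) => //= uv L IH.
by rewrite size_allpairs mulnS leq_add // leq_mul ?size_max_covered.
Qed.

Lemma pair_card_transfer :
  pair_card Rt (transfer T Rt A B A) (transfer T Rt A B B) <= M * M * pair_card T A B.
Proof.
apply: leq_trans (size_generated_pairs); rewrite pair_card_ab_pairs.
apply: (@size_oriented_pairs_le _ (index^~ (nodes Rt))); first exact/filter_uniq/uniq_node_pairs.
move=> [a b]; rewrite mem_filter /= => /andP[/andP[hab hR] _]; split => //.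
have [u [v /and3P[huv ha hb]]] := transfer_generated model hR.
have /and5P[nu nv huv' _ _] := model_transversal model huv.
have [ltuv|] := ltnP (index u (nodes T)) (index v (nodes T)).
  left; apply/flatten_mapP; exists (u, v).
    by rewrite mem_filter /= ltuv huv (model_pair_nodes model huv).
  by apply: allpairs_f; apply: mem_max_covered_nodes.
rewrite leq_eqVlt eq_sym => /orP[/eqP|ltvu].
  by move/(index_inj [::]); rewrite !mem_nodes => /(_ nu nv) e; rewrite e eqxx in huv'.
right; apply/flatten_mapP; exists (v, u).
  by rewrite mem_filter /= ltvu inABC huv (model_pair_nodes model) // inABC.
by apply: allpairs_f; apply: mem_max_covered_nodes.
Qed.

End Counting.

Lemma size_max_covered_nodes_leaves_below T Rt : nleaves Rt = nleaves T -> forall u,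
  size (max_covered_nodes Rt (leaves_below T u)) <= maxn 1 (2 * (depth Rt - 2)).
Proof.
move=> hn u; have [lo [hi [_ hu]]] := leaves_below_interval T u.
rewrite (@max_covered_nodes_ext _ _ (segment lo hi)) ?size_max_covered_nodes_segment //.
by move=> k; rewrite hn => /hu.
Qed.

Lemma full_levels_nleaves K t :
  (forall p : npath, size p <= K -> is_node t p) -> 2 ^ K <= nleaves t.
Proof.
elim: K t => [|K IH] [|l r] h; rewrite ?expn0 ?nleaves_gt0 //; first by move: (h [:: false] isT).
rewrite nleaves_node expnS mul2n -addnn leq_add // IH // => p hp.
- exact: (h (false :: p)).
- exact: (h (true :: p)).
Qed.

Lemma complete_nleaves t : complete t -> 2 ^ (depth t - 2) <= nleaves t.
Proof.
case=> hlevels _; apply: full_levels_nleaves => -[|b p] hp; first by case: t {hlevels hp}.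
by apply: hlevels; move: hp; rewrite /=; lia.
Qed.

Open Scope R_scope.

Lemma INR_expn m k : INR (m ^ k) = INR m ^ k.
Proof. by elim: k => [|k IH] //; rewrite expnS -multE mult_INR IH. Qed.

Lemma log2_ge (n k : nat) : (2 ^ k <= n)%N -> INR k <= log2 (INR n).
Proof.
move=> hk.
have h2k : 2 ^ k <= INR n.
  by rewrite -[2]/(INR 2) -INR_expn; apply/le_INR/leP.
have hln2 : 0 < ln 2 by rewrite -ln_1; apply: ln_increasing; lra.
rewrite /log2 /Rdiv (_ : INR 2 = 2) //; apply: (Rmult_le_reg_r (ln 2)) => //.
rewrite Rmult_assoc Rinv_l; last lra.
rewrite Rmult_1_r -ln_pow; last lra.
have [hlt|<-] := Rle_lt_or_eq_dec _ _ h2k; last lra.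
by apply/Rlt_le/ln_increasing => //; apply: pow_lt; lra.
Qed.

Lemma decomposition_bound_log2 (n k : nat) : (2 <= n)%N -> (2 ^ k <= n)%N ->
  INR (maxn 1 (2 * k) * maxn 1 (2 * k)) <= INR 4 * log2 (INR n) ^ 2.
Proof.
move=> hn hk.
have hL := log2_ge hk.
have hL1 : 1 <= log2 (INR n) by apply: (@log2_ge n 1); rewrite expn1.
have hm : INR (maxn 1 (2 * k)) <= 2 * log2 (INR n).
  case: k {hk} hL => [|k] hL; first by rewrite /=; lra.
  rewrite (_ : maxn 1 (2 * k.+1) = 2 * k.+1)%N; last lia.
  by rewrite mult_INR [INR 2]/=; lra.
rewrite mult_INR (_ : INR 4 = 4); last by rewrite /=; lra.
by have := pos_INR (maxn 1 (2 * k)); nra.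
Qed.

Lemma sparse_scale (p q m V : nat) (d L : R) : (p <= m * q)%N ->
  INR q <= d * INR V -> INR m <= INR 4 * L ^ 2 -> INR p <= INR 4 * d * L ^ 2 * INR V.
Proof.
move=> hpq hq hm.
have hp : INR p <= INR m * INR q by rewrite -mult_INR; apply/le_INR/leP.
have := pos_INR q; have := pos_INR m => hm0 hq0.
have : INR m * INR q <= INR 4 * L ^ 2 * (d * INR V).
  by apply: Rmult_le_compat => //; lra.
lra.
Qed.

Close Scope R_scope.

Theorem lemma4p5 (n : nat) (d : R) (G : rel 'I_n) (T Rt : btree)
    (AT BT : rel npath) :
  2 <= n ->
  size (leaves T) = n ->
  signed_tree_model T AT BT -> clean T AT BT -> sparse d T AT BT ->
  models T AT BT G ->
  size (leaves Rt) = n -> complete Rt ->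
  exists AR BR : rel npath,
    signed_tree_model Rt AR BR /\
    sparse (Rmult (Rmult (INR 4) d) (pow (log2 (INR n)) 2)) Rt AR BR /\
    models Rt AR BR G.
Proof.
move=> hn hnT hT hclean hsparse hG hnR hcomplete.
have hnRT : nleaves Rt = nleaves T by rewrite /nleaves hnT hnR.
exists (transfer T Rt AT BT AT), (transfer T Rt AT BT BT); split.
  exact: transfer_signed_tree_model.
split; last exact: transfer_models.
have hcard := pair_card_transfer hT (size_max_covered_nodes_leaves_below hnRT).
rewrite /sparse; apply: (sparse_scale hcard).
  by move: hsparse; rewrite /sparse !size_nodes hnRT.
by apply: decomposition_bound_log2 => //; rewrite -hnR; apply: complete_nleaves.
Qed.
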